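(* Let $G\subset\mathbb{R}^2$ be (the open domain bounded by) a convex polygon with smallest inner angle $\alpha\in(0,\pi)$. Then \[ A_G\ge 1+\frac{1}{\sin\frac{\alpha}{2}}. \]
   Context: For a domain $G\subsetneq\mathbb{R}^n$ let $d_G(x)=d(x,\partial G)$. The quasihyperbolic distance is $k_G(x,y)=\inf_\gamma\int_\gamma\frac{|dx|}{d_G(x)}$ over rectifiable curves $\gamma\subset G$ joining $x$ and $y$. The distance ratio metric is $j_G(x,y)=\log\left(1+\frac{|x-y|}{\min\{d_G(x),d_G(y)\}}\right)$. The uniformity constant is $A_G=\inf\{A\ge1: k_G(x,y)\le A\,j_G(x,y)\text{ for all }x,y\in G\}$ (with $\inf\emptyset=+\infty$). *)

From Stdlib Require Import Reals Lra Classical ClassicalEpsilon.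
Open Scope R_scope.

Definition pt : Type := (R * R)%type.
Definition psub (p q : pt) : pt := (fst p - fst q, snd p - snd q).
Definition pnorm (p : pt) : R := sqrt (fst p ^ 2 + snd p ^ 2).
Definition pdist (p q : pt) : R := pnorm (psub p q).
Definition pdot (p q : pt) : R := fst p * fst q + snd p * snd q.
Definition pcross (p q : pt) : R := fst p * snd q - snd p * fst q.

(** * Supremum / infimum of a set of reals (0 if it does not exist) *)
Definition Rsup (E : R -> Prop) : R :=
  match excluded_middle_informative (exists m, is_lub E m) with
  | left H => proj1_sig (constructive_indefinite_description _ H)
  | right _ => 0
  end.
Definition Rinf (E : R -> Prop) : R := - Rsup (fun y => E (- y)).

Definition boundary (G : pt -> Prop) (z : pt) : Prop :=
  forall eps, 0 < eps ->
    (exists a, G a /\ pdist a z < eps) /\ (exists b, ~ G b /\ pdist b z < eps).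
Definition dG (G : pt -> Prop) (x : pt) : R :=
  Rinf (fun r => exists z, boundary G z /\ r = pdist x z).

Fixpoint sumR (f : nat -> R) (n : nat) : R :=
  match n with O => 0 | S k => sumR f k + f k end.

Definition curve_in (G : pt -> Prop) (g : R -> pt) : Prop :=
  (forall t, 0 <= t <= 1 -> G (g t)) /\
  (forall t, 0 <= t <= 1 -> forall eps, 0 < eps -> exists delta, 0 < delta /\
     forall s, 0 <= s <= 1 -> Rabs (s - t) < delta -> pdist (g s) (g t) < eps).

Definition partition01 (n : nat) (p : nat -> R) : Prop :=
  (1 <= n)%nat /\ p O = 0 /\ p n = 1 /\ (forall i, (i < n)%nat -> p i < p (S i)).

Definition rectifiable (g : R -> pt) : Prop :=
  exists L, forall n p, partition01 n p ->
    sumR (fun i => pdist (g (p (S i))) (g (p i))) n <= L.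

(* The line integral  ∫_g f |dx|  equals I: limit of Riemann-Stieltjes sums
   with respect to arc length as the mesh tends to 0. *)
Definition line_integral_is (f : pt -> R) (g : R -> pt) (I : R) : Prop :=
  forall eps, 0 < eps -> exists delta, 0 < delta /\
    forall n p tau, partition01 n p ->
      (forall i, (i < n)%nat -> p (S i) - p i < delta) ->
      (forall i, (i < n)%nat -> p i <= tau i <= p (S i)) ->
      Rabs (sumR (fun i => f (g (tau i)) * pdist (g (p (S i))) (g (p i))) n - I) < eps.

Definition k_G (G : pt -> Prop) (x y : pt) : R :=
  Rinf (fun I => exists g : R -> pt, g 0 = x /\ g 1 = y /\ curve_in G g /\
          rectifiable g /\ line_integral_is (fun z => / dG G z) g I).

Definition j_G (G : pt -> Prop) (x y : pt) : R :=
  ln (1 + pdist x y / Rmin (dG G x) (dG G y)).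

(** A is admissible in the definition of the uniformity constant A_G;
    A_G is the infimum of the admissible A (+oo if none). *)
Definition uniformity_admissible (G : pt -> Prop) (A : R) : Prop :=
  1 <= A /\ forall x y, G x -> G y -> k_G G x y <= A * j_G G x y.

(* Vertices v 0, ..., v (n-1), indices mod n, listed counterclockwise;
   strict convexity: every other vertex lies strictly to the left of each edge. *)
Definition nxt (n i : nat) : nat := ((i + 1) mod n)%nat.
Definition prv (n i : nat) : nat := ((i + n - 1) mod n)%nat.

Definition convex_polygon (n : nat) (v : nat -> pt) : Prop :=
  (3 <= n)%nat /\
  forall i j, (i < n)%nat -> (j < n)%nat -> j <> i -> j <> nxt n i ->
    0 < pcross (psub (v (nxt n i)) (v i)) (psub (v j) (v i)).

Definition poly_domain (n : nat) (v : nat -> pt) (x : pt) : Prop :=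
  forall i, (i < n)%nat -> 0 < pcross (psub (v (nxt n i)) (v i)) (psub x (v i)).

Definition inner_angle (n : nat) (v : nat -> pt) (i : nat) : R :=
  let a := psub (v (prv n i)) (v i) in
  let b := psub (v (nxt n i)) (v i) in
  acos (pdot a b / (pnorm a * pnorm b)).

Definition smallest_inner_angle (n : nat) (v : nat -> pt) (alpha : R) : Prop :=
  (exists i, (i < n)%nat /\ alpha = inner_angle n v i) /\
  (forall i, (i < n)%nat -> alpha <= inner_angle n v i).

From Stdlib Require Import Reals Lra Lia Psatz Classical ClassicalEpsilon.
Open Scope R_scope.

(* Near a vertex [V] of angle [alpha] the polygon coincides with the wedge spanned by the
   unit edge directions [u1], [u2]; there [s := |u1 - u2| / 2 = sin (alpha / 2)] and
   [d_G z <= s |z - V|].  Let [y] be the bisector point with [d_G y = h], so [|y - V| = h / s],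
   and [x] the point at fixed distance from [y] in the direction [u2]; the whole segment
   [[x, y]] has [d_G = h], so [j_G x y ~ ln (1 / h)].  A curve from [x] to [y] either stays
   where [d_G <= D0], costing at least [|x - y| / D0], or climbs from [d_G = h] to
   [d_G >= D0] (cost [>= ln (D0 / h)]) and then descends into the ball of radius [h / s]
   around [V] (cost [>= ln (D0 / h) / s]).  Choosing [h] and [D0] small on suitable scales
   gives [k_G x y >= (1 + 1 / s - o(1)) j_G x y]. *)

Lemma pnorm_ge0 p : 0 <= pnorm p.
Proof. apply sqrt_pos. Qed.

Lemma pnorm_sq p : pnorm p * pnorm p = fst p ^ 2 + snd p ^ 2.
Proof. apply sqrt_sqrt; nra. Qed.

Lemma pnorm_unit p : fst p ^ 2 + snd p ^ 2 = 1 -> pnorm p = 1.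
Proof. intros H; unfold pnorm; rewrite H; apply sqrt_1. Qed.

Lemma pnorm_eq0 p : pnorm p = 0 -> fst p = 0 /\ snd p = 0.
Proof. intros H; pose proof (pnorm_sq p) as E; rewrite H in E; split; nra. Qed.

Lemma pnorm_le p r : 0 <= r -> fst p ^ 2 + snd p ^ 2 <= r * r -> pnorm p <= r.
Proof. intros Hr H; pose proof (pnorm_sq p); pose proof (pnorm_ge0 p); nra. Qed.

Lemma pnorm_scale k p : pnorm (k * fst p, k * snd p) = Rabs k * pnorm p.
Proof.
  unfold pnorm; cbn [fst snd].
  replace ((k * fst p) ^ 2 + (k * snd p) ^ 2) with (k² * (fst p ^ 2 + snd p ^ 2))
    by (unfold Rsqr; ring).
  rewrite sqrt_mult, sqrt_Rsqr_abs; [reflexivity | apply Rle_0_sqr | nra].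
Qed.

Lemma lagrange_identity p q :
  (pnorm p * pnorm q) * (pnorm p * pnorm q) = pcross p q ^ 2 + pdot p q ^ 2.
Proof.
  transitivity ((pnorm p * pnorm p) * (pnorm q * pnorm q)); [ring|].
  rewrite !pnorm_sq; unfold pcross, pdot; ring.
Qed.

Lemma le_of_sqr_le x y : 0 <= y -> x * x <= y * y -> x <= y.
Proof. intros; nra. Qed.

Lemma pcross_le p q : pcross p q <= pnorm p * pnorm q.
Proof.
  apply le_of_sqr_le; [apply Rmult_le_pos; apply pnorm_ge0|].
  rewrite lagrange_identity; nra.
Qed.

Lemma pdot_le p q : pdot p q <= pnorm p * pnorm q.
Proof.
  apply le_of_sqr_le; [apply Rmult_le_pos; apply pnorm_ge0|].
  rewrite lagrange_identity; nra.
Qed.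

Lemma pnorm_add_le p q : pnorm (fst p + fst q, snd p + snd q) <= pnorm p + pnorm q.
Proof.
  pose proof (pnorm_sq p); pose proof (pnorm_sq q);
  pose proof (pnorm_ge0 p); pose proof (pnorm_ge0 q); pose proof (pdot_le p q).
  unfold pdot in *; apply pnorm_le; cbn [fst snd]; nra.
Qed.

Lemma pdist_ge0 x y : 0 <= pdist x y.
Proof. apply pnorm_ge0. Qed.

Lemma pdist_sym x y : pdist x y = pdist y x.
Proof. unfold pdist, pnorm, psub; simpl; f_equal; ring. Qed.

Lemma pdist_refl x : pdist x x = 0.
Proof.
  unfold pdist, pnorm, psub; cbn [fst snd].
  replace ((fst x - fst x) ^ 2 + (snd x - snd x) ^ 2) with 0 by ring; apply sqrt_0.
Qed.

Lemma pdist_triangle x y z : pdist x z <= pdist x y + pdist y z.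
Proof.
  unfold pdist; rewrite <- (pnorm_add_le (psub x y) (psub y z)).
  right; unfold psub; simpl; f_equal; f_equal; ring.
Qed.

Lemma pcross_le_dist e z w : pnorm e = 1 -> pcross e (psub z w) <= pdist z w.
Proof. intros He; pose proof (pcross_le e (psub z w)); rewrite He in *; unfold pdist; lra. Qed.

Lemma Rsup_is_lub E : (exists m, is_lub E m) -> is_lub E (Rsup E).
Proof.
  intros H; unfold Rsup; destruct (excluded_middle_informative _) as [H'|H'].
  - exact (proj2_sig (constructive_indefinite_description _ H')).
  - contradiction.
Qed.

Lemma Rsup_bounded_is_lub E x ub : E x -> (forall y, E y -> y <= ub) -> is_lub E (Rsup E).
Proof.
  intros Ex Hub; apply Rsup_is_lub.
  destruct (completeness E) as [m Hm]; [exists ub; exact Hub | exists x; exact Ex | eauto].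
Qed.

Lemma Rinf_is_glb E x lb : E x -> (forall y, E y -> lb <= y) ->
  is_lub (fun y => E (- y)) (- Rinf E).
Proof.
  intros Ex Hlb; unfold Rinf; rewrite Ropp_involutive.
  apply (Rsup_bounded_is_lub _ (- x) (- lb)).
  - rewrite Ropp_involutive; exact Ex.
  - intros y Hy; specialize (Hlb _ Hy); lra.
Qed.

Lemma Rinf_le E x lb : E x -> (forall y, E y -> lb <= y) -> Rinf E <= x.
Proof.
  intros Ex Hlb; destruct (Rinf_is_glb E x lb Ex Hlb) as [Hub _].
  enough (- x <= - Rinf E) by lra.
  apply Hub; rewrite Ropp_involutive; exact Ex.
Qed.

Lemma le_Rinf E m : (exists x, E x) -> (forall y, E y -> m <= y) -> m <= Rinf E.
Proof.
  intros [x Ex] Hlb; destruct (Rinf_is_glb E x m Ex Hlb) as [_ Hleast].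
  enough (- Rinf E <= - m) by lra.
  apply Hleast; intros y Hy; specialize (Hlb _ Hy); lra.
Qed.

Definition seg (z w : pt) (t : R) : pt :=
  (fst z + t * (fst w - fst z), snd z + t * (snd w - snd z)).

Lemma seg0 z w : seg z w 0 = z.
Proof. destruct z; unfold seg; simpl; f_equal; ring. Qed.

Lemma seg1 z w : seg z w 1 = w.
Proof. destruct z, w; unfold seg; simpl; f_equal; ring. Qed.

Lemma seg_dist z w t t' : pdist (seg z w t) (seg z w t') = Rabs (t - t') * pdist w z.
Proof. unfold pdist; rewrite <- pnorm_scale; unfold psub, seg; simpl; f_equal; f_equal; ring. Qed.

Lemma seg_uniformly_continuous z w eps : 0 < eps ->
  exists eta, 0 < eta /\ forall t t', Rabs (t - t') <= eta -> pdist (seg z w t) (seg z w t') < eps.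
Proof.
  intros Heps; pose proof (pdist_ge0 w z).
  exists (eps / (pdist w z + 1)); split; [apply Rdiv_lt_0_compat; lra|].
  intros t t' Ht; rewrite seg_dist.
  apply Rle_lt_trans with (eps / (pdist w z + 1) * pdist w z); [apply Rmult_le_compat_r; lra|].
  apply Rmult_lt_reg_r with (pdist w z + 1); [lra|]; field_simplify; lra.
Qed.

Section SegmentExit.
Variables (G : pt -> Prop) (z w : pt).
Hypotheses (Gz : G z) (Gw : ~ G w).

Definition stays_in (t : R) : Prop := 0 <= t <= 1 /\ forall t', 0 <= t' <= t -> G (seg z w t').

Definition exit_time : R := Rsup stays_in.

Lemma stays_in0 : stays_in 0.
Proof. split; [lra|]; intros t' Ht'; replace t' with 0 by lra; rewrite seg0; exact Gz. Qed.

Lemma exit_time_lub : is_lub stays_in exit_time.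
Proof. apply (Rsup_bounded_is_lub _ 0 1 stays_in0); intros y [Hy _]; lra. Qed.

Lemma exit_time_range : 0 <= exit_time <= 1.
Proof.
  destruct exit_time_lub as [Hub Hleast]; split.
  - exact (Hub 0 stays_in0).
  - apply Hleast; intros y [Hy _]; lra.
Qed.

Lemma stays_in_before r : r < exit_time -> exists t, stays_in t /\ r < t.
Proof.
  intros Hr; apply NNPP; intros Hn.
  enough (exit_time <= r) by lra.
  apply exit_time_lub; intros t Ht; apply Rnot_lt_le; intros Hrt; eauto.
Qed.

Lemma seg_before_exit t : 0 <= t < exit_time -> G (seg z w t).
Proof.
  intros Ht; destruct (stays_in_before t) as [t' [[_ Ht'] Htt']]; [lra|].
  apply Ht'; lra.
Qed.

Lemma exit_point_boundary : boundary G (seg z w exit_time).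
Proof.
  intros eps Heps; pose proof exit_time_range as Hex.
  destruct (seg_uniformly_continuous z w eps Heps) as [eta [Heta Hclose]].
  split.
  - destruct (stays_in_before (exit_time - eta)) as [t [[Ht Hin] Hlt]]; [lra|].
    assert (t <= exit_time) by (apply exit_time_lub; split; assumption).
    exists (seg z w t); split; [apply Hin; lra|].
    apply Hclose; rewrite Rabs_left1; lra.
  - apply NNPP; intros Hn.
    assert (Hnear : forall b, pdist b (seg z w exit_time) < eps -> G b)
      by (intros b Hb; apply NNPP; intros Hb'; apply Hn; eauto).
    destruct (Req_dec exit_time 1) as [E1|E1].
    + apply Gw; rewrite <- (seg1 z w); apply Hnear; rewrite E1, pdist_refl; lra.
    + set (mu := Rmin eta (1 - exit_time) / 2).
      assert (Hmu : 0 < mu /\ mu <= eta /\ mu <= 1 - exit_time)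
        by (unfold mu; pose proof (Rmin_l eta (1 - exit_time));
            pose proof (Rmin_r eta (1 - exit_time));
            assert (0 < Rmin eta (1 - exit_time)) by (apply Rmin_glb_lt; lra); lra).
      assert (Hstay : stays_in (exit_time + mu)).
      { split; [lra|]; intros t' Ht'.
        destruct (Rlt_or_le t' exit_time).
        - apply seg_before_exit; lra.
        - apply Hnear, Hclose; rewrite Rabs_right; lra. }
      pose proof (proj1 exit_time_lub _ Hstay); lra.
Qed.

Lemma exit_point_dist : pdist z (seg z w exit_time) <= pdist z w.
Proof.
  assert (E1 : pdist z (seg z w exit_time) = Rabs (0 - exit_time) * pdist w z)
    by (rewrite <- seg_dist, seg0; reflexivity).
  assert (E2 : pdist z w = Rabs (0 - 1) * pdist w z)
    by (rewrite <- seg_dist, seg0, seg1; reflexivity).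
  pose proof exit_time_range; pose proof (pdist_ge0 w z).
  rewrite E1, E2, !Rabs_left1 by lra; nra.
Qed.

End SegmentExit.

Lemma boundary_between (G : pt -> Prop) z w : G z -> ~ G w ->
  exists p, boundary G p /\ pdist z p <= pdist z w.
Proof.
  intros Gz Gw; exists (seg z w (exit_time G z w)).
  split; [apply exit_point_boundary | apply exit_point_dist]; assumption.
Qed.

Lemma dG_le_boundary (G : pt -> Prop) x q : boundary G q -> dG G x <= pdist x q.
Proof.
  intros Bq; apply (Rinf_le _ _ 0); [eauto|].
  intros y [q' [_ ->]]; apply pdist_ge0.
Qed.

Lemma dG_le_dist_exterior (G : pt -> Prop) z w : G z -> ~ G w -> dG G z <= pdist z w.
Proof.
  intros Gz Gw; destruct (boundary_between G z w Gz Gw) as [p [Bp Hp]].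
  eapply Rle_trans; [apply dG_le_boundary, Bp | exact Hp].
Qed.

Lemma le_dG (G : pt -> Prop) z w0 m : G z -> ~ G w0 ->
  (forall w, ~ G w -> m <= pdist z w) -> m <= dG G z.
Proof.
  intros Gz Gw0 H; destruct (boundary_between G z w0 Gz Gw0) as [p [Bp _]].
  apply le_Rinf; [eauto|].
  intros y [q [Bq ->]]; apply Rnot_lt_le; intros Hlt.
  destruct (Bq (m - pdist z q)) as [_ [b [Gb Hb]]]; [lra|].
  pose proof (H b Gb); pose proof (pdist_triangle z q b); rewrite (pdist_sym q b) in *; lra.
Qed.

Lemma dG_lipschitz (G : pt -> Prop) a b w0 : G a -> ~ G w0 ->
  dG G b <= dG G a + pdist a b.
Proof.
  intros Ga Gw0; destruct (boundary_between G a w0 Ga Gw0) as [p [Bp _]].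
  enough (dG G b - pdist a b <= dG G a) by lra.
  apply le_Rinf; [eauto|].
  intros y [q [Bq ->]].
  pose proof (dG_le_boundary G b q Bq); pose proof (pdist_triangle b a q).
  rewrite (pdist_sym b a) in *; lra.
Qed.

(* The foot of the perpendicular from [z] to the line [o + R e] is not in [G]. *)
Lemma dG_le_halfplane (G : pt -> Prop) e o z : pnorm e = 1 ->
  (forall w, G w -> 0 < pcross e (psub w o)) -> G z -> dG G z <= pcross e (psub z o).
Proof.
  intros He Hhalf Gz; set (d := pcross e (psub z o)).
  pose proof (pnorm_sq e) as Ee; rewrite He in Ee.
  set (w := (fst z + d * snd e, snd z - d * fst e)).
  assert (Hw : ~ G w).
  { intros Gw; specialize (Hhalf w Gw).
    assert (pcross e (psub w o) = d * (1 - (fst e ^ 2 + snd e ^ 2)))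
      by (unfold w, d, pcross, psub; cbn [fst snd]; ring).
    rewrite <- Ee in H; lra. }
  eapply Rle_trans; [apply (dG_le_dist_exterior G z w Gz Hw)|].
  assert (Hd : 0 < d) by (apply Hhalf, Gz).
  unfold pdist; replace (psub z w) with (- d * fst (snd e, - fst e), - d * snd (snd e, - fst e))
    by (unfold w, psub; cbn [fst snd]; f_equal; ring).
  rewrite pnorm_scale, Rabs_left by lra.
  rewrite pnorm_unit; [lra|]; cbn [fst snd]; nra.
Qed.

Lemma ln_le_ln x y : 0 < x -> x <= y -> ln x <= ln y.
Proof. intros Hx [Hxy | ->]; [left; apply ln_increasing|]; lra. Qed.

Lemma ln_le_sub1 x : 0 < x -> ln x <= x - 1.
Proof. intros Hx; pose proof (exp_ineq1_le (ln x)); rewrite exp_ln in *; lra. Qed.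

Lemma ln_sub_le a b : 0 < a -> 0 < b -> ln b - ln a <= (b - a) / a.
Proof.
  intros Ha Hb.
  replace (ln b - ln a) with (ln (b / a))
    by (unfold Rdiv; rewrite ln_mult, ln_Rinv; try apply Rinv_0_lt_compat; lra).
  replace ((b - a) / a) with (b / a - 1) by (field; lra).
  apply ln_le_sub1, Rdiv_lt_0_compat; assumption.
Qed.

Lemma sumR_ext (f g : nat -> R) n : (forall i, (i < n)%nat -> f i = g i) -> sumR f n = sumR g n.
Proof.
  induction n as [|n IH]; intros H; simpl; [reflexivity|].
  rewrite IH, (H n); [reflexivity | lia | intros; apply H; lia].
Qed.

Lemma sumR_le (f g : nat -> R) n : (forall i, (i < n)%nat -> f i <= g i) -> sumR f n <= sumR g n.
Proof.
  induction n as [|n IH]; intros H; simpl; [lra|].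
  pose proof (IH (fun i Hi => H i ltac:(lia))); pose proof (H n ltac:(lia)); lra.
Qed.

Lemma sumR_scale_l (f : nat -> R) k n : sumR (fun i => k * f i) n = k * sumR f n.
Proof. induction n as [|n IH]; simpl; [ring|]; rewrite IH; ring. Qed.

Lemma sumR_telescope (p : nat -> R) n : sumR (fun i => p (S i) - p i) n = p n - p O.
Proof. induction n as [|n IH]; simpl; [ring|]; rewrite IH; ring. Qed.

Lemma sumR_telescope_le (f phi : nat -> R) m n : (m <= n)%nat ->
  (forall i, (m <= i < n)%nat -> phi (S i) - phi i <= f i) ->
  phi n - phi m <= sumR f n - sumR f m.
Proof.
  intros Hmn H; induction n as [|n IH].
  - replace m with O by lia; lra.
  - destruct (Nat.eq_dec m (S n)) as [->|Hne]; [lra|]; simpl.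
    pose proof (IH ltac:(lia) (fun i Hi => H i ltac:(lia))); pose proof (H n ltac:(lia)); lra.
Qed.

Lemma pdist_le_sumR (z : nat -> pt) n :
  pdist (z n) (z O) <= sumR (fun i => pdist (z (S i)) (z i)) n.
Proof.
  induction n as [|n IH]; simpl; [rewrite pdist_refl; lra|].
  pose proof (pdist_triangle (z (S n)) (z n) (z O)); lra.
Qed.

Lemma exists_argmax (f : nat -> R) n :
  exists m, (m <= n)%nat /\ forall i, (i <= n)%nat -> f i <= f m.
Proof.
  induction n as [|n [m [Hm H]]].
  - exists O; split; [lia|]; intros i Hi; replace i with O by lia; lra.
  - destruct (Rle_or_lt (f (S n)) (f m)).
    + exists m; split; [lia|]; intros i Hi.
      destruct (Nat.eq_dec i (S n)) as [->|]; [assumption|apply H; lia].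
    + exists (S n); split; [lia|]; intros i Hi.
      destruct (Nat.eq_dec i (S n)) as [->|]; [lra|pose proof (H i ltac:(lia)); lra].
Qed.

Lemma partition01_range n p : partition01 n p -> forall i, (i <= n)%nat -> 0 <= p i <= 1.
Proof.
  intros [_ [H0 [H1 Hinc]]].
  assert (Hmono : forall i j, (i <= j <= n)%nat -> p i <= p j).
  { intros i j Hij; induction j as [|j IH]; [replace i with O by lia; lra|].
    destruct (Nat.eq_dec i (S j)) as [->|]; [lra|].
    pose proof (IH ltac:(lia)); pose proof (Hinc j ltac:(lia)); lra. }
  intros i Hi; rewrite <- H0, <- H1; split; apply Hmono; lia.
Qed.

Lemma partition01_uniform N : (0 < N)%nat ->
  partition01 N (fun i => INR i / INR N) /\
  forall i, INR (S i) / INR N - INR i / INR N = / INR N.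
Proof.
  intros HN; assert (HNr : 0 < INR N) by (apply lt_0_INR; assumption).
  assert (Hstep : forall i, INR (S i) / INR N - INR i / INR N = / INR N)
    by (intros; rewrite S_INR; field; lra).
  split; [|exact Hstep].
  split; [lia|]; split; [simpl; field; lra|]; split; [field; lra|].
  intros i _; pose proof (Hstep i); pose proof (Rinv_0_lt_compat _ HNr); lra.
Qed.

Definition chain_sum (G : pt -> Prop) (z : nat -> pt) (n : nat) : R :=
  sumR (fun i => / Rmin (dG G (z i)) (dG G (z (S i))) * pdist (z (S i)) (z i)) n.

Definition qh_path (G : pt -> Prop) (x y : pt) (g : R -> pt) (I : R) : Prop :=
  g 0 = x /\ g 1 = y /\ curve_in G g /\ rectifiable g /\
  line_integral_is (fun z => / dG G z) g I.

(* Riemann sums over uniform partitions, each tag chosen at the endpoint with the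
   larger distance to the boundary, are chain sums. *)
Lemma line_integral_ge_chain_bound (G : pt -> Prop) g I B :
  curve_in G g -> line_integral_is (fun z => / dG G z) g I ->
  (forall N (z : nat -> pt), (forall i, (i <= N)%nat -> G (z i)) ->
     z O = g 0 -> z N = g 1 -> B <= chain_sum G z N) ->
  B <= I.
Proof.
  intros [Hg _] HI Hchain; apply Rnot_lt_le; intros Hlt.
  destruct (HI (B - I)) as [delta [Hdelta Hint]]; [lra|].
  destruct (archimed_cor1 delta Hdelta) as [N [HN HN0]].
  set (p := fun i : nat => INR i / INR N).
  destruct (partition01_uniform N HN0) as [Hpart0 Hstep0].
  assert (Hpart : partition01 N p) by exact Hpart0.
  assert (Hstep : forall i, p (S i) - p i = / INR N) by exact Hstep0.
  pose proof (Rinv_0_lt_compat _ (lt_0_INR _ HN0)).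
  set (tau := fun i => if Rle_dec (dG G (g (p i))) (dG G (g (p (S i)))) then p i else p (S i)).
  specialize (Hint N p tau Hpart).
  assert (Hsum : sumR (fun i => / dG G (g (tau i)) * pdist (g (p (S i))) (g (p i))) N
                 = chain_sum G (fun i => g (p i)) N).
  { apply sumR_ext; intros i _; unfold tau; destruct (Rle_dec _ _).
    - rewrite Rmin_left; auto.
    - rewrite Rmin_right; [reflexivity | lra]. }
  rewrite Hsum in Hint.
  assert (Hbound : B <= chain_sum G (fun i => g (p i)) N).
  { pose proof Hpart as [_ [Hp0 [HpN _]]]; apply Hchain.
    - intros i Hi; apply Hg, (partition01_range N p Hpart i Hi).
    - rewrite Hp0; reflexivity.
    - rewrite HpN; reflexivity. }
  assert (Hclose : Rabs (chain_sum G (fun i => g (p i)) N - I) < B - I).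
  { apply Hint; intros i Hi; [rewrite Hstep; assumption|].
    unfold tau; pose proof (Hstep i); destruct (Rle_dec _ _); lra. }
  apply Rabs_def2 in Hclose; lra.
Qed.

Lemma le_k_G (G : pt -> Prop) x y B :
  (exists g I, qh_path G x y g I) ->
  (forall N (z : nat -> pt), (forall i, (i <= N)%nat -> G (z i)) ->
     z O = x -> z N = y -> B <= chain_sum G z N) ->
  B <= k_G G x y.
Proof.
  intros [g0 [I0 H0]] Hchain; apply le_Rinf; [exists I0, g0; exact H0|].
  intros I [g [<- [<- [Hc [_ HI]]]]]; exact (line_integral_ge_chain_bound G g I B Hc HI Hchain).
Qed.

Lemma segment_qh_path (G : pt -> Prop) x y h : 0 < h ->
  (forall t, 0 <= t <= 1 -> G (seg x y t) /\ dG G (seg x y t) = h) ->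
  qh_path G x y (seg x y) (/ h * pdist y x).
Proof.
  intros Hh Hseg.
  assert (Hlen : forall n p, partition01 n p ->
            sumR (fun i => pdist (seg x y (p (S i))) (seg x y (p i))) n = pdist y x).
  { intros n p Hp; pose proof Hp as [_ [Hp0 [Hp1 Hinc]]].
    rewrite (sumR_ext _ (fun i => pdist y x * (p (S i) - p i))).
    - rewrite sumR_scale_l, sumR_telescope, Hp0, Hp1; ring.
    - intros i Hi; rewrite seg_dist, Rabs_right; [ring|]; pose proof (Hinc i Hi); lra. }
  split; [apply seg0|]; split; [apply seg1|]; split; [split|split].
  - intros t Ht; apply Hseg, Ht.
  - intros t _ eps Heps; destruct (seg_uniformly_continuous x y eps Heps) as [eta [Heta Hc]].
    exists eta; split; [assumption|]; intros s _ Hs; apply Hc; lra.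
  - exists (pdist y x); intros n p Hp; rewrite Hlen; [lra | exact Hp].
  - intros eps Heps; exists 1; split; [lra|]; intros n p tau Hp _ Htau.
    rewrite (sumR_ext _ (fun i => / h * pdist (seg x y (p (S i))) (seg x y (p i)))).
    + rewrite sumR_scale_l, Hlen, Rminus_diag, Rabs_R0; assumption.
    + intros i Hi; pose proof (partition01_range n p Hp i ltac:(lia));
        pose proof (partition01_range n p Hp (S i) ltac:(lia)); pose proof (Htau i Hi).
      rewrite (proj2 (Hseg (tau i) ltac:(lra))); reflexivity.
Qed.

Lemma ln_1p_exp_le Y : 0 <= Y -> ln (1 + exp Y) <= Y + 1.
Proof.
  intros HY; rewrite <- (ln_exp (Y + 1)); apply ln_le_ln; [pose proof (exp_pos Y); lra|].
  rewrite exp_plus; pose proof (exp_ineq1 1 ltac:(lra)); pose proof (exp_ineq1_le Y); nra.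
Qed.

Lemma affine_lt_exp a e Y : 0 <= a -> 0 <= Y ->
  4 * a <= e * e * Y -> a < e * Y -> a * (Y + 1) < exp (e * Y).
Proof.
  intros Ha HY H4 H1.
  replace (exp (e * Y)) with (exp (e * Y / 2) * exp (e * Y / 2))
    by (rewrite <- exp_plus; f_equal; field).
  pose proof (exp_ineq1_le (e * Y / 2)); nra.
Qed.

Lemma lt_mul_of_abs_div_lt a b Y : 0 < a -> Rabs (b / a) < Y -> b < a * Y.
Proof.
  intros Ha HY; pose proof (Rle_abs (b / a)).
  replace b with (a * (b / a)) by (field; lra); apply Rmult_lt_compat_l; lra.
Qed.

(* With [h = L e^(-Y)] and [D0 = L e^(-eta Y)], the left side grows like [A Y]
   while the right side grows like [min (e^(eta Y)) (K (1 - eta) Y)]. *)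
Lemma small_scale_witness A K L h0 : 0 <= A -> A < K -> 0 < L -> 0 < h0 ->
  exists h D0, 0 < h < h0 /\ 0 < D0 /\
    A * ln (1 + L / h) < Rmin (L / D0) (K * (ln D0 - ln h)).
Proof.
  intros HA HAK HL Hh0.
  set (eta := (K - A) / (2 * K)).
  assert (Heta : 0 < eta) by (unfold eta; apply Rdiv_lt_0_compat; lra).
  set (Y := 1 + Rabs (ln (L / h0)) + Rabs (2 * A / (K - A)) + Rabs (4 * A / (eta * eta))
              + Rabs (A / eta)).
  pose proof (Rabs_pos (ln (L / h0))); pose proof (Rabs_pos (2 * A / (K - A)));
    pose proof (Rabs_pos (4 * A / (eta * eta))); pose proof (Rabs_pos (A / eta)).
  assert (HY : 1 <= Y) by (unfold Y; lra).
  assert (Hh0Y : ln (L / h0) < Y) by (pose proof (Rle_abs (ln (L / h0))); unfold Y; lra).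
  assert (HKY : 2 * A < (K - A) * Y) by (apply lt_mul_of_abs_div_lt; [lra | unfold Y; lra]).
  assert (H4Y : 4 * A < eta * eta * Y) by (apply lt_mul_of_abs_div_lt; [nra | unfold Y; lra]).
  assert (H1Y : A < eta * Y) by (apply lt_mul_of_abs_div_lt; [lra | unfold Y; lra]).
  exists (L * exp (- Y)), (L * exp (- (eta * Y))).
  assert (E1 : L / (L * exp (- Y)) = exp Y)
    by (rewrite exp_Ropp; field; split; [apply Rgt_not_eq, exp_pos | lra]).
  assert (E2 : L / (L * exp (- (eta * Y))) = exp (eta * Y))
    by (rewrite exp_Ropp; field; split; [apply Rgt_not_eq, exp_pos | lra]).
  assert (E3 : ln (L * exp (- (eta * Y))) - ln (L * exp (- Y)) = (1 - eta) * Y)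
    by (rewrite !ln_mult, !ln_exp by (apply exp_pos || lra); ring).
  split; [split|split].
  - apply Rmult_lt_0_compat; [lra | apply exp_pos].
  - rewrite <- (exp_ln h0), <- (exp_ln L), <- exp_plus by lra; apply exp_increasing.
    unfold Rdiv in Hh0Y; rewrite ln_mult, ln_Rinv in Hh0Y by (try apply Rinv_0_lt_compat; lra).
    lra.
  - apply Rmult_lt_0_compat; [lra | apply exp_pos].
  - rewrite E1, E2, E3.
    assert (Hln : A * ln (1 + exp Y) <= A * (Y + 1))
      by (apply Rmult_le_compat_l, ln_1p_exp_le; lra).
    assert (HK : K * ((1 - eta) * Y) = (K + A) / 2 * Y) by (unfold eta; field; lra).
    pose proof (affine_lt_exp A eta Y HA ltac:(lra) ltac:(lra) H1Y).
    apply Rmin_glb_lt; lra.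
Qed.

Lemma ln_step_le da db r : 0 < da -> 0 < db -> 0 <= r -> db <= da + r ->
  ln db - ln da <= / Rmin da db * r.
Proof.
  intros Ha Hb Hr H; eapply Rle_trans; [apply ln_sub_le; assumption|].
  assert (Hm : 0 < Rmin da db) by (apply Rmin_glb_lt; assumption).
  pose proof (Rmin_l da db); pose proof (Rinv_le_contravar _ _ Hm (Rmin_l da db)).
  apply Rle_trans with (/ da * r); [unfold Rdiv; rewrite Rmult_comm; apply Rmult_le_compat_l|
    apply Rmult_le_compat_r]; try lra.
  left; apply Rinv_0_lt_compat; lra.
Qed.

Lemma ln_ratio_step_le da db ra rb r s : 0 < da -> 0 < db -> 0 < ra -> 0 < rb -> 0 <= r ->
  0 < s -> ra <= rb + r -> db <= s * rb ->
  (ln ra - ln rb) / s <= / Rmin da db * r.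
Proof.
  intros Ha Hb Hra Hrb Hr Hs H1 H2.
  assert (Hm : 0 < Rmin da db) by (apply Rmin_glb_lt; assumption).
  pose proof (ln_sub_le rb ra Hrb Hra); pose proof (Rmin_r da db).
  apply Rle_trans with (r / (s * rb)).
  - apply Rmult_le_reg_r with s; [assumption|].
    replace ((ln ra - ln rb) / s * s) with (ln ra - ln rb) by (field; lra).
    replace (r / (s * rb) * s) with (r / rb) by (field; lra).
    apply Rle_trans with ((ra - rb) / rb); [assumption|].
    apply Rmult_le_compat_r; [left; apply Rinv_0_lt_compat|]; lra.
  - unfold Rdiv; rewrite Rmult_comm; apply Rmult_le_compat_r; [assumption|].
    apply Rinv_le_contravar; [assumption | lra].
Qed.

Lemma chain_sum_ge_far (G : pt -> Prop) z n D0 : 0 < D0 ->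
  (forall i, (i <= n)%nat -> 0 < dG G (z i) <= D0) ->
  pdist (z n) (z O) / D0 <= chain_sum G z n.
Proof.
  intros HD0 Hd.
  apply Rle_trans with (sumR (fun i => / D0 * pdist (z (S i)) (z i)) n).
  - rewrite sumR_scale_l; unfold Rdiv; rewrite Rmult_comm.
    apply Rmult_le_compat_l; [left; apply Rinv_0_lt_compat; lra | apply pdist_le_sumR].
  - apply sumR_le; intros i Hi; apply Rmult_le_compat_r; [apply pdist_ge0|].
    pose proof (Hd i ltac:(lia)); pose proof (Hd (S i) ltac:(lia)).
    apply Rinv_le_contravar; [apply Rmin_glb_lt; lra|].
    eapply Rle_trans; [apply Rmin_l | lra].
Qed.

(* [dG] is 1-Lipschitz, so along a chain [ln dG] can only grow as fast as the chain sum. *)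
Lemma chain_sum_ge_climb (G : pt -> Prop) w0 z m : ~ G w0 ->
  (forall i, (i <= m)%nat -> G (z i) /\ 0 < dG G (z i)) ->
  ln (dG G (z m)) - ln (dG G (z O)) <= chain_sum G z m.
Proof.
  intros Hw0 Hz; replace (chain_sum G z m) with (chain_sum G z m - chain_sum G z O)
    by (unfold chain_sum; simpl; ring).
  apply (sumR_telescope_le _ (fun i => ln (dG G (z i)))); [lia|]; intros i Hi.
  destruct (Hz i ltac:(lia)) as [Gi Hi0]; destruct (Hz (S i) ltac:(lia)) as [_ Hi1].
  apply ln_step_le; try assumption; [apply pdist_ge0|].
  rewrite pdist_sym; apply (dG_lipschitz G _ _ w0 Gi Hw0).
Qed.

Definition half_chord (u1 u2 : pt) : R := pnorm (psub u1 u2) / 2.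

Definition in_wedge (V u1 u2 z : pt) : Prop :=
  0 < pcross u2 (psub z V) /\ 0 < pcross (psub z V) u1.

Section Wedge.
Variables (G : pt -> Prop) (V u1 u2 : pt).
Hypotheses (Hu1 : pnorm u1 = 1) (Hu2 : pnorm u2 = 1) (Hopen : 0 < pcross u2 u1).
Hypothesis HG_wedge : forall z, G z -> in_wedge V u1 u2 z.
Hypothesis HdG_pos : forall z, G z -> 0 < dG G z.

Local Notation s := (half_chord u1 u2).

Lemma half_chord_pos : 0 < s.
Proof.
  pose proof (pcross_le u2 (psub u1 u2)); rewrite Hu2 in *.
  replace (pcross u2 (psub u1 u2)) with (pcross u2 u1) in * by (unfold pcross, psub; simpl; ring).
  unfold half_chord; lra.
Qed.

Lemma vertex_notin : ~ G V.
Proof.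
  intros GV; destruct (HG_wedge V GV) as [H _].
  unfold pcross, psub in H; simpl in H; lra.
Qed.

Lemma dG_le_edge2 z : G z -> dG G z <= pcross u2 (psub z V).
Proof.
  apply dG_le_halfplane; [assumption|]; intros w Gw; apply (HG_wedge w Gw).
Qed.

Lemma dG_le_edge1 z : G z -> dG G z <= pcross (psub z V) u1.
Proof.
  assert (Hflip : forall p, pcross (- fst u1, - snd u1) p = pcross p u1)
    by (intros; unfold pcross; simpl; ring).
  rewrite <- Hflip; apply dG_le_halfplane.
  - rewrite <- Hu1; unfold pnorm; simpl; f_equal; ring.
  - intros w Gw; rewrite Hflip; apply (HG_wedge w Gw).
Qed.

Lemma dG_le_vertex_dist z : G z -> dG G z <= s * pdist z V.
Proof.
  intros Gz; pose proof (dG_le_edge1 z Gz); pose proof (dG_le_edge2 z Gz).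
  pose proof (pcross_le (psub z V) (psub u1 u2)).
  replace (pcross (psub z V) (psub u1 u2))
    with (pcross u2 (psub z V) + pcross (psub z V) u1) in * by (unfold pcross, psub; simpl; ring).
  unfold half_chord, pdist; lra.
Qed.

Lemma vertex_dist_pos z : G z -> 0 < pdist z V.
Proof.
  intros Gz; pose proof (dG_le_vertex_dist z Gz); pose proof (HdG_pos z Gz).
  pose proof half_chord_pos; pose proof (pdist_ge0 z V); nra.
Qed.

(* Near the vertex [dG <= s |z - V|], so [ln |z - V|] drops at rate at most [s] per unit of chain sum. *)
Lemma chain_sum_ge_descent z m n : (m <= n)%nat -> (forall i, (i <= n)%nat -> G (z i)) ->
  (ln (pdist (z m) V) - ln (pdist (z n) V)) / s <= chain_sum G z n - chain_sum G z m.
Proof.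
  intros Hmn Hz; pose proof half_chord_pos.
  replace ((ln (pdist (z m) V) - ln (pdist (z n) V)) / s)
    with ((- ln (pdist (z n) V) / s) - (- ln (pdist (z m) V) / s)) by (field; lra).
  apply (sumR_telescope_le _ (fun i => - ln (pdist (z i) V) / s)); [assumption|]; intros i Hi.
  replace (- ln (pdist (z (S i)) V) / s - - ln (pdist (z i) V) / s)
    with ((ln (pdist (z i) V) - ln (pdist (z (S i)) V)) / s) by (field; lra).
  pose proof (Hz i ltac:(lia)); pose proof (Hz (S i) ltac:(lia)).
  apply ln_ratio_step_le; auto using HdG_pos, vertex_dist_pos, pdist_ge0, dG_le_vertex_dist.
  pose proof (pdist_triangle (z i) (z (S i)) V); rewrite (pdist_sym (z i) (z (S i))) in *; lra.
Qed.

(* Either the chain stays where [dG <= D0], or it climbs from [dG = h] to [dG >= D0]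
   and then descends towards the vertex, ending where [dG <= h]. *)
Lemma chain_sum_ge_wedge z n h D0 : (forall i, (i <= n)%nat -> G (z i)) -> 0 < h -> 0 < D0 ->
  dG G (z O) = h -> pdist (z n) V <= h / s ->
  Rmin (pdist (z n) (z O) / D0) ((1 + / s) * (ln D0 - ln h)) <= chain_sum G z n.
Proof.
  intros Hz Hh HD0 Hz0 Hzn; pose proof half_chord_pos as Hs.
  destruct (exists_argmax (fun i => dG G (z i)) n) as [m [Hm Hmax]].
  destruct (Rle_or_lt (dG G (z m)) D0) as [Hlow | Hhigh].
  - eapply Rle_trans; [apply Rmin_l|]; apply chain_sum_ge_far; [assumption|].
    intros i Hi; split; [apply HdG_pos, Hz, Hi | eapply Rle_trans; [apply Hmax, Hi | exact Hlow]].
  - eapply Rle_trans; [apply Rmin_r|].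
    assert (Hclimb : ln (dG G (z m)) - ln h <= chain_sum G z m).
    { rewrite <- Hz0; apply (chain_sum_ge_climb G V); [exact vertex_notin|].
      intros i Hi; split; [|apply HdG_pos]; apply Hz; lia. }
    pose proof (chain_sum_ge_descent z m n Hm Hz) as Hdescent.
    assert (Hzm : dG G (z m) / s <= pdist (z m) V).
    { pose proof (dG_le_vertex_dist (z m) (Hz m Hm)).
      apply Rmult_le_reg_r with s; [assumption|]; unfold Rdiv; rewrite Rmult_assoc, Rinv_l; lra. }
    assert (Hratio : ln (dG G (z m)) - ln h <= ln (pdist (z m) V) - ln (pdist (z n) V)).
    { assert (Hdiv : forall a, 0 < a -> ln (a / s) = ln a - ln s)
        by (intros; unfold Rdiv; rewrite ln_mult, ln_Rinv; try apply Rinv_0_lt_compat; lra).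
      pose proof (HdG_pos _ (Hz m Hm)) as Hdm; pose proof (vertex_dist_pos _ (Hz n ltac:(lia))) as Hrn.
      pose proof (ln_le_ln _ _ (Rdiv_lt_0_compat _ _ Hdm Hs) Hzm).
      pose proof (ln_le_ln _ _ Hrn Hzn).
      rewrite !Hdiv in * by assumption; lra. }
    pose proof (ln_le_ln D0 (dG G (z m)) HD0 ltac:(lra)).
    assert (/ s * (ln D0 - ln h) <= (ln (pdist (z m) V) - ln (pdist (z n) V)) / s)
      by (unfold Rdiv; rewrite (Rmult_comm (/ s)); apply Rmult_le_compat_r;
          [left; apply Rinv_0_lt_compat|]; lra).
    lra.
Qed.

Section Truncated.
Variable c : R.
Hypothesis Hc : 0 < c.
Hypothesis Htrunc : forall z, in_wedge V u1 u2 z -> pdist z V < c -> G z.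

Definition bisector_point (h : R) : pt :=
  (fst V + h / pcross u2 u1 * (fst u1 + fst u2), snd V + h / pcross u2 u1 * (snd u1 + snd u2)).

Definition shifted_point (h : R) : pt :=
  (fst (bisector_point h) + c / 2 * fst u2, snd (bisector_point h) + c / 2 * snd u2).

(* [u1 + u2] and [u1 - u2] are orthogonal, with cross product [2 pcross u2 u1]. *)
Lemma pnorm_sum_mul_pnorm_diff :
  pnorm (fst u1 + fst u2, snd u1 + snd u2) * pnorm (psub u1 u2) = 2 * pcross u2 u1.
Proof.
  pose proof (pnorm_sq u1) as E1; pose proof (pnorm_sq u2) as E2; rewrite Hu1 in E1; rewrite Hu2 in E2.
  pose proof (lagrange_identity (fst u1 + fst u2, snd u1 + snd u2) (psub u1 u2)) as L.
  replace (pdot (fst u1 + fst u2, snd u1 + snd u2) (psub u1 u2)) with 0 in L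
    by (unfold pdot, psub; simpl; simpl in E1, E2; nra).
  replace (pcross (fst u1 + fst u2, snd u1 + snd u2) (psub u1 u2)) with (2 * pcross u2 u1) in L
    by (unfold pcross, psub; simpl; ring).
  pose proof (pnorm_ge0 (fst u1 + fst u2, snd u1 + snd u2)); pose proof (pnorm_ge0 (psub u1 u2)).
  apply Rle_antisym; apply le_of_sqr_le; nra.
Qed.

Lemma bisector_point_dist h : 0 < h -> pdist (bisector_point h) V = h / s.
Proof.
  intros Hh; pose proof half_chord_pos; pose proof pnorm_sum_mul_pnorm_diff as P.
  unfold pdist; replace (psub (bisector_point h) V)
    with (h / pcross u2 u1 * fst (fst u1 + fst u2, snd u1 + snd u2),
          h / pcross u2 u1 * snd (fst u1 + fst u2, snd u1 + snd u2))
    by (unfold bisector_point, psub; simpl; f_equal; ring).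
  rewrite pnorm_scale, Rabs_right by (apply Rle_ge, Rlt_le, Rdiv_lt_0_compat; lra).
  unfold half_chord in *; apply Rmult_eq_reg_r with (pnorm (psub u1 u2)); [|lra].
  rewrite Rmult_assoc, P; field; lra.
Qed.

Lemma shifted_point_dist h : pdist (bisector_point h) (shifted_point h) = c / 2.
Proof.
  unfold pdist; replace (psub (bisector_point h) (shifted_point h))
    with (- (c / 2) * fst u2, - (c / 2) * snd u2) by (unfold shifted_point, psub; simpl; f_equal; ring).
  rewrite pnorm_scale, Hu2, Rabs_left by lra; ring.
Qed.

Lemma le_dG_truncated_wedge z m : G z ->
  m <= pcross u2 (psub z V) -> m <= pcross (psub z V) u1 -> m <= c - pdist z V -> m <= dG G z.
Proof.
  intros Gz H2 H1 Hc'; apply (le_dG G z V m Gz vertex_notin); intros w Gw.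
  assert (Hout : ~ 0 < pcross u2 (psub w V) \/ ~ 0 < pcross (psub w V) u1 \/ ~ pdist w V < c).
  { apply NNPP; intros Hn; apply Gw, Htrunc; [split|]; apply NNPP; intros Hk; apply Hn; tauto. }
  destruct Hout as [Hw | [Hw | Hw]].
  - pose proof (pcross_le_dist u2 z w Hu2).
    replace (pcross u2 (psub z w)) with (pcross u2 (psub z V) - pcross u2 (psub w V)) in *
      by (unfold pcross, psub; simpl; ring).
    lra.
  - assert (Hu1' : pnorm (- fst u1, - snd u1) = 1) by (rewrite <- Hu1; unfold pnorm; simpl; f_equal; ring).
    pose proof (pcross_le_dist _ z w Hu1').
    replace (pcross (- fst u1, - snd u1) (psub z w))
      with (pcross (psub z V) u1 - pcross (psub w V) u1) in * by (unfold pcross, psub; simpl; ring).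
    lra.
  - pose proof (pdist_triangle w z V); rewrite (pdist_sym w z) in *; lra.
Qed.

(* The segment runs parallel to the edge along [u2], at distance [h] from it. *)
Lemma segment_dG_const h : 0 < h -> h * (1 + / s) < c / 2 -> forall t, 0 <= t <= 1 ->
  G (seg (shifted_point h) (bisector_point h) t) /\
  dG G (seg (shifted_point h) (bisector_point h) t) = h.
Proof.
  intros Hh Hsmall t Ht; pose proof half_chord_pos as Hs.
  set (z := seg (shifted_point h) (bisector_point h) t).
  assert (Hd2 : pcross u2 (psub z V) = h)
    by (unfold z, seg, shifted_point, bisector_point, pcross, psub; simpl; field; unfold pcross in Hopen; lra).
  assert (Hd1 : pcross (psub z V) u1 = h + (1 - t) * (c / 2) * pcross u2 u1)
    by (unfold z, seg, shifted_point, bisector_point, pcross, psub; simpl; field; unfold pcross in Hopen; lra).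
  assert (Hd1h : h <= pcross (psub z V) u1)
    by (rewrite Hd1; pose proof (Rmult_le_pos ((1 - t) * (c / 2)) (pcross u2 u1)); nra).
  assert (Hzb : pdist z (bisector_point h) <= c / 2).
  { unfold z; rewrite <- (seg1 (shifted_point h) (bisector_point h)) at 2.
    rewrite seg_dist, shifted_point_dist, Rabs_left1 by lra; nra. }
  assert (HzV : pdist z V <= c - h).
  { pose proof (pdist_triangle z (bisector_point h) V); rewrite bisector_point_dist in * by assumption.
    replace (h / s) with (h * (1 + / s) - h) in * by (field; lra); lra. }
  assert (Gz : G z) by (apply Htrunc; [split|]; lra).
  split; [exact Gz|]; apply Rle_antisym.
  - rewrite <- Hd2; apply dG_le_edge2, Gz.
  - apply le_dG_truncated_wedge; [exact Gz | lra | lra | lra].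
Qed.

Lemma wedge_uniformity_bound A : 1 <= A ->
  (forall x y, G x -> G y -> k_G G x y <= A * j_G G x y) -> 1 + / s <= A.
Proof.
  intros HA1 Hadm; pose proof half_chord_pos as Hs.
  assert (HK : 0 < 1 + / s) by (pose proof (Rinv_0_lt_compat _ Hs); lra).
  apply Rnot_lt_le; intros HAK.
  destruct (small_scale_witness A (1 + / s) (c / 2) (c / (2 * (1 + / s))))
    as [h [D0 [[Hh Hhc] [HD0 Hgap]]]]; try lra; [apply Rdiv_lt_0_compat; lra|].
  assert (Hsmall : h * (1 + / s) < c / 2).
  { replace (c / 2) with (c / (2 * (1 + / s)) * (1 + / s)) by (field; lra).
    apply Rmult_lt_compat_r; assumption. }
  pose proof (segment_dG_const h Hh Hsmall) as Hseg.
  destruct (Hseg 0 ltac:(lra)) as [Gx dx]; rewrite seg0 in Gx, dx.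
  destruct (Hseg 1 ltac:(lra)) as [Gy dy]; rewrite seg1 in Gy, dy.
  assert (Hk : Rmin (c / 2 / D0) ((1 + / s) * (ln D0 - ln h))
               <= k_G G (shifted_point h) (bisector_point h)).
  { apply le_k_G; [eexists; eexists; exact (segment_qh_path G _ _ h Hh Hseg)|].
    intros N z Hz Hz0 HzN; rewrite <- (shifted_point_dist h), <- Hz0, <- HzN.
    apply chain_sum_ge_wedge; try assumption; [rewrite Hz0; exact dx|].
    rewrite HzN, bisector_point_dist by assumption; lra. }
  specialize (Hadm _ _ Gx Gy); unfold j_G in Hadm.
  rewrite dx, dy, Rmin_left, pdist_sym, shifted_point_dist in Hadm by lra.
  lra.
Qed.

End Truncated.
End Wedge.

Lemma neg_pnorm_mul_dist_le_pcross e p q : - (pnorm e * pdist p q) <= pcross e (psub p q).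
Proof.
  pose proof (pcross_le e (psub q p)).
  replace (pcross e (psub q p)) with (- pcross e (psub p q)) in * by (unfold pcross, psub; simpl; ring).
  rewrite (pdist_sym p q); unfold pdist; lra.
Qed.

Definition unitv (p : pt) : pt := (/ pnorm p * fst p, / pnorm p * snd p).

Lemma pnorm_unitv p : 0 < pnorm p -> pnorm (unitv p) = 1.
Proof.
  intros Hp; unfold unitv; rewrite pnorm_scale, Rabs_right; [field; lra|].
  left; apply Rinv_0_lt_compat, Hp.
Qed.

Lemma pcross_unitv_l p q : 0 < pnorm p -> pcross p q = pnorm p * pcross (unitv p) q.
Proof. intros Hp; unfold pcross, unitv; simpl; field; lra. Qed.

Lemma pcross_unitv_r p q : 0 < pnorm q -> pcross p q = pnorm q * pcross p (unitv q).
Proof. intros Hq; unfold pcross, unitv; simpl; field; lra. Qed.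

Lemma pnorm_pos_of_pcross_pos p q : 0 < pcross p q -> 0 < pnorm p /\ 0 < pnorm q.
Proof.
  intros H; pose proof (pnorm_ge0 p); pose proof (pnorm_ge0 q).
  split; match goal with |- 0 < pnorm ?r => destruct (Req_dec (pnorm r) 0) as [E|E]; [|lra] end;
    apply pnorm_eq0 in E; destruct E as [E1 E2]; unfold pcross in H; rewrite E1, E2 in H; lra.
Qed.

Lemma half_chord_sin u1 u2 : pnorm u1 = 1 -> pnorm u2 = 1 ->
  half_chord u1 u2 = sin (acos (pdot u1 u2) / 2).
Proof.
  intros Hu1 Hu2; set (alpha := acos (pdot u1 u2)).
  pose proof (pnorm_sq u1) as E1; pose proof (pnorm_sq u2) as E2; rewrite Hu1 in E1; rewrite Hu2 in E2.
  pose proof (pdot_le u1 u2) as Hle1; pose proof (pdot_le u1 (- fst u2, - snd u2)) as Hle2.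
  rewrite Hu1 in Hle1, Hle2; rewrite Hu2 in Hle1.
  replace (pnorm (- fst u2, - snd u2)) with 1 in * by (rewrite <- Hu2; unfold pnorm; simpl; f_equal; ring).
  replace (pdot u1 (- fst u2, - snd u2)) with (- pdot u1 u2) in * by (unfold pdot; simpl; ring).
  assert (Hcos : cos alpha = pdot u1 u2) by (apply cos_acos; lra).
  assert (Hsin2 : sin (alpha / 2) * sin (alpha / 2) = (1 - pdot u1 u2) / 2).
  { pose proof (cos_2a_sin (alpha / 2)); replace (2 * (alpha / 2)) with alpha in * by field; lra. }
  assert (Hchord2 : half_chord u1 u2 * half_chord u1 u2 = (1 - pdot u1 u2) / 2).
  { unfold half_chord; pose proof (pnorm_sq (psub u1 u2)) as E.
    replace (pnorm (psub u1 u2) / 2 * (pnorm (psub u1 u2) / 2))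
      with (pnorm (psub u1 u2) * pnorm (psub u1 u2) / 4) by field.
    rewrite E; unfold pdot, psub; simpl in *; nra. }
  assert (Hsin : 0 <= sin (alpha / 2))
    by (pose proof (acos_bound (pdot u1 u2)); pose proof PI_RGT_0; apply sin_ge_0; unfold alpha; lra).
  assert (Hchord : 0 <= half_chord u1 u2) by (unfold half_chord; pose proof (pnorm_ge0 (psub u1 u2)); lra).
  apply Rle_antisym; apply le_of_sqr_le; lra.
Qed.

Lemma nxt_spec n i : (i < n)%nat ->
  ((i + 1 < n)%nat /\ nxt n i = (i + 1)%nat) \/ ((i + 1 = n)%nat /\ nxt n i = 0%nat).
Proof.
  intros Hi; unfold nxt; destruct (Nat.eq_dec (i + 1) n) as [E|E].
  - right; split; [assumption|]; rewrite E; apply Nat.Div0.mod_same.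
  - left; split; [lia|]; apply Nat.mod_small; lia.
Qed.

Lemma prv_spec n i : (i < n)%nat ->
  (i = 0%nat /\ prv n i = (n - 1)%nat) \/ ((0 < i)%nat /\ prv n i = (i - 1)%nat).
Proof.
  intros Hi; unfold prv; destruct i as [|i].
  - left; split; [reflexivity|]; apply Nat.mod_small; lia.
  - right; split; [lia|]; replace (S i + n - 1)%nat with (i + 1 * n)%nat by lia.
    rewrite Nat.Div0.mod_add, Nat.mod_small; lia.
Qed.

Lemma prv_lt n i : (i < n)%nat -> (prv n i < n)%nat.
Proof. intros Hi; destruct (prv_spec n i Hi) as [[? ->]|[? ->]]; lia. Qed.

Lemma nxt_prv n i : (i < n)%nat -> nxt n (prv n i) = i.
Proof.
  intros Hi; destruct (nxt_spec n (prv n i) (prv_lt n i Hi)) as [[? ->]|[? ->]];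
    destruct (prv_spec n i Hi) as [[? E]|[? E]]; rewrite E in *; lia.
Qed.

Lemma nxt_eq_inv n i j : (j < n)%nat -> (i < n)%nat -> nxt n j = i -> j = prv n i.
Proof.
  intros Hj Hi E; destruct (nxt_spec n j Hj) as [[? F]|[? F]];
    destruct (prv_spec n i Hi) as [[? ->]|[? ->]]; lia.
Qed.

Lemma neighbours_distinct n i : (3 <= n)%nat -> (i < n)%nat -> prv n i <> i /\ prv n i <> nxt n i.
Proof.
  intros Hn Hi; destruct (nxt_spec n i Hi) as [[? ->]|[? ->]];
    destruct (prv_spec n i Hi) as [[? ->]|[? ->]]; lia.
Qed.

Lemma exists_pos_lower_bound (n : nat) (P : nat -> Prop) (f : nat -> R) :
  (forall j, (j < n)%nat -> P j -> 0 < f j) ->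
  exists c, 0 < c /\ forall j, (j < n)%nat -> P j -> c <= f j.
Proof.
  induction n as [|n IH]; intros H.
  - exists 1; split; [lra|]; intros; lia.
  - destruct IH as [c [Hc Hcf]]; [intros; apply H; auto; lia|].
    destruct (classic (P n)) as [Pn|Pn].
    + exists (Rmin c (f n)); split; [apply Rmin_glb_lt; auto|].
      intros j Hj Pj; destruct (Nat.eq_dec j n) as [->|]; [apply Rmin_r|].
      eapply Rle_trans; [apply Rmin_l | apply Hcf; auto; lia].
    + exists c; split; [assumption|]; intros j Hj Pj.
      destruct (Nat.eq_dec j n) as [->|]; [contradiction | apply Hcf; auto; lia].
Qed.

Lemma vertex_notin_poly_domain n v i : (i < n)%nat -> ~ poly_domain n v (v i).
Proof. intros Hi H; specialize (H i Hi); unfold pcross, psub in H; simpl in H; lra. Qed.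

Lemma poly_dG_pos n v z : (0 < n)%nat -> poly_domain n v z -> 0 < dG (poly_domain n v) z.
Proof.
  intros Hn Gz; set (e := fun j => psub (v (nxt n j)) (v j)).
  assert (He : forall j, (j < n)%nat -> 0 < pnorm (e j))
    by (intros j Hj; exact (proj1 (pnorm_pos_of_pcross_pos _ _ (Gz j Hj)))).
  destruct (exists_pos_lower_bound n (fun _ => True)
              (fun j => pcross (e j) (psub z (v j)) / pnorm (e j))) as [m [Hm Hmf]].
  { intros j Hj _; apply Rdiv_lt_0_compat; [apply Gz | apply He]; assumption. }
  apply Rlt_le_trans with m; [assumption|].
  apply (le_dG _ z (v O) m Gz (vertex_notin_poly_domain n v O Hn)); intros w Gw.
  assert (Hex : exists j, (j < n)%nat /\ ~ 0 < pcross (e j) (psub w (v j))).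
  { apply NNPP; intros Hne; apply Gw; intros j Hj; apply NNPP; intros Hk; apply Hne; eauto. }
  destruct Hex as [j [Hj Hw]]; specialize (Hmf j Hj I); specialize (He j Hj); simpl in Hmf.
  pose proof (pcross_le (e j) (psub z w)).
  replace (pcross (e j) (psub z w)) with (pcross (e j) (psub z (v j)) - pcross (e j) (psub w (v j))) in *
    by (unfold pcross, psub; simpl; ring).
  assert (m * pnorm (e j) <= pcross (e j) (psub z (v j))).
  { apply Rmult_le_reg_r with (/ pnorm (e j)); [apply Rinv_0_lt_compat; assumption|].
    rewrite Rmult_assoc, Rinv_r, Rmult_1_r by lra; exact Hmf. }
  unfold pdist; apply Rmult_le_reg_r with (pnorm (e j)); [assumption | nra].
Qed.

Section Vertex.
Variables (n : nat) (v : nat -> pt) (i : nat).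
Hypotheses (Hconv : convex_polygon n v) (Hi : (i < n)%nat).

Local Notation V := (v i).
Local Notation pa := (psub (v (prv n i)) (v i)).
Local Notation pb := (psub (v (nxt n i)) (v i)).

Lemma vertex_pcross_pos : 0 < pcross pb pa.
Proof.
  destruct Hconv as [Hn3 Hc]; apply Hc; auto using prv_lt; apply neighbours_distinct; assumption.
Qed.

Lemma vertex_edges_pos : 0 < pnorm pb /\ 0 < pnorm pa.
Proof. exact (pnorm_pos_of_pcross_pos _ _ vertex_pcross_pos). Qed.

Lemma vertex_edges_unit : pnorm (unitv pa) = 1 /\ pnorm (unitv pb) = 1.
Proof. destruct vertex_edges_pos; split; apply pnorm_unitv; assumption. Qed.

Lemma vertex_opening_pos : 0 < pcross (unitv pb) (unitv pa).
Proof.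
  pose proof vertex_pcross_pos as H; destruct vertex_edges_pos as [Hb Ha].
  rewrite pcross_unitv_l, pcross_unitv_r in H by assumption.
  apply Rmult_lt_reg_l with (pnorm pb); [assumption|]; apply Rmult_lt_reg_l with (pnorm pa); lra.
Qed.

Lemma vertex_edge_halfplanes z :
  pcross (psub (v (nxt n i)) (v i)) (psub z (v i)) = pnorm pb * pcross (unitv pb) (psub z V) /\
  pcross (psub (v (nxt n (prv n i))) (v (prv n i))) (psub z (v (prv n i)))
    = pnorm pa * pcross (psub z V) (unitv pa).
Proof.
  destruct vertex_edges_pos as [Hb Ha].
  rewrite nxt_prv by assumption.
  split; [apply pcross_unitv_l, Hb|].
  rewrite <- pcross_unitv_r by assumption; unfold pcross, psub; simpl; ring.
Qed.

Lemma poly_domain_in_vertex_wedge z :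
  poly_domain n v z -> in_wedge V (unitv pa) (unitv pb) z.
Proof.
  intros Gz; destruct vertex_edges_pos as [Hb Ha]; destruct (vertex_edge_halfplanes z) as [E1 E2].
  pose proof (Gz i Hi) as H1; pose proof (Gz (prv n i) (prv_lt n i Hi)) as H2.
  rewrite E1 in H1; rewrite E2 in H2.
  split; [apply Rmult_lt_reg_l with (pnorm pb) | apply Rmult_lt_reg_l with (pnorm pa)]; lra.
Qed.

(* Every edge not incident to [v i] keeps [v i] strictly inside its half-plane, with a
   uniform margin. *)
Lemma vertex_wedge_near_in_poly_domain : exists c, 0 < c /\
  forall z, in_wedge V (unitv pa) (unitv pb) z -> pdist z V < c -> poly_domain n v z.
Proof.
  destruct Hconv as [Hn3 Hc]; set (e := fun j => psub (v (nxt n j)) (v j)).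
  destruct (exists_pos_lower_bound n (fun j => j <> i /\ nxt n j <> i)
              (fun j => pcross (e j) (psub V (v j)) / (pnorm (e j) + 1))) as [c [Hc0 Hcf]].
  { intros j Hj [Hji Hnj]; pose proof (pnorm_ge0 (e j)).
    apply Rdiv_lt_0_compat; [apply Hc; auto | lra]. }
  exists c; split; [assumption|]; intros z [Hz2 Hz1] Hzc j Hj.
  destruct vertex_edges_pos as [Hb Ha]; destruct (vertex_edge_halfplanes z) as [E1 E2].
  destruct (Nat.eq_dec j i) as [->|Hji]; [rewrite E1; apply Rmult_lt_0_compat; assumption|].
  destruct (Nat.eq_dec (nxt n j) i) as [Hnj|Hnj].
  { rewrite (nxt_eq_inv n i j Hj Hi Hnj), E2; apply Rmult_lt_0_compat; assumption. }
  specialize (Hcf j Hj (conj Hji Hnj)); simpl in Hcf; fold (e j).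
  assert (Hq : 0 < pcross (e j) (psub V (v j))) by (apply Hc; auto).
  pose proof (pnorm_ge0 (e j)); pose proof (neg_pnorm_mul_dist_le_pcross (e j) z V).
  assert (c * (pnorm (e j) + 1) <= pcross (e j) (psub V (v j))).
  { apply Rmult_le_reg_r with (/ (pnorm (e j) + 1)); [apply Rinv_0_lt_compat; lra|].
    rewrite Rmult_assoc, Rinv_r, Rmult_1_r by lra; exact Hcf. }
  replace (pcross (e j) (psub z (v j))) with (pcross (e j) (psub V (v j)) + pcross (e j) (psub z V))
    by (unfold pcross, psub; simpl; ring).
  pose proof (Rmult_le_compat_l (pnorm (e j)) _ _ ltac:(lra) (Rlt_le _ _ Hzc)); nra.
Qed.

Lemma inner_angle_unitv : inner_angle n v i = acos (pdot (unitv pa) (unitv pb)).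
Proof.
  destruct vertex_edges_pos as [Hb Ha]; unfold inner_angle; f_equal.
  unfold pdot, unitv; simpl; field; lra.
Qed.

End Vertex.

Theorem theorem1p8 (n : nat) (v : nat -> pt) (alpha : R) :
  convex_polygon n v ->
  smallest_inner_angle n v alpha ->
  forall A, uniformity_admissible (poly_domain n v) A ->
  1 + / sin (alpha / 2) <= A.
Proof.
  intros Hconv [[i [Hi ->]] _] A [HA1 Hadm].
  destruct (vertex_edges_unit n v i Hconv Hi) as [Hu1 Hu2].
  destruct (vertex_wedge_near_in_poly_domain n v i Hconv Hi) as [c [Hc Htrunc]].
  rewrite inner_angle_unitv, <- half_chord_sin by assumption.
  apply (wedge_uniformity_bound (poly_domain n v) (v i)
           (unitv (psub (v (prv n i)) (v i))) (unitv (psub (v (nxt n i)) (v i))) Hu1 Hu2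
           (vertex_opening_pos n v i Hconv Hi) (poly_domain_in_vertex_wedge n v i Hconv Hi)
           (fun z => poly_dG_pos n v z ltac:(destruct Hconv; lia)) c Hc Htrunc A HA1 Hadm).
Qed.
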